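(* Consider the online instance reservation problem described in the context, with parameters $p>0$, $\alpha\in[0,1)$, $\tau\ge1$, and $\beta=1/(1-\alpha)$. The deterministic online algorithm $A_\beta$ is $(2-\alpha)$-competitive: for every $T$ and every demand sequence $\mathbf d=(d_1,\dots,d_T)$, $C_{A_\beta}(\mathbf d)\le (2-\alpha)\,C_{\mathrm{OPT}}(\mathbf d)$, where $C_{A_\beta}(\mathbf d)$ is the cost incurred by $A_\beta$ and $C_{\mathrm{OPT}}(\mathbf d)$ is the optimal offline cost.
   Context: Instance reservation problem: time is slotted $t=1,2,\dots,T$. At each time $t$ a demand $d_t\in\{0,1,2,\dots\}$ arrives; set $d_t=0$ for $t\le 0$. A user chooses integers $o_t\ge 0$ (on-demand instances used at $t$) and $r_t\ge 0$ (instances newly reserved at $t$; $r_t=0$ for $t\le 0$), subject to $o_t+\sum_{i=t-\tau+1}^{t} r_i\ge d_t$ for all $t$, where $\tau$ is the reservation period. The reservation fee is normalized to $1$, the on-demand rate is $p$ (the paper assumes throughout $p\ll 1$), and reserved instances run at rate $\alpha p$. The total cost is $C=\sum_{t=1}^T\big(o_t p + r_t + \alpha p(d_t-o_t)\big)$. $C_{\mathrm{OPT}}(\mathbf d)$ is the minimum of $C$ over all feasible integer $(o_t,r_t)$ given the whole sequence. An online algorithm chooses $o_t,r_t$ knowing only $d_1,\dots,d_t$. Algorithm $A_z$ (threshold $z\ge0$): maintain integers $x_i$, initially $x_i=0$ for all $i$. At each time $t$, upon arrival of $d_t$: while $p\cdot\big|\{i: t-\tau+1\le i\le t,\ d_i>x_i\}\big|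 > z$: increase $r_t$ by $1$; increase $x_i$ by $1$ for $i=t,\dots,t+\tau-1$; increase $x_i$ by $1$ for $i=t-\tau+1,\dots,t-1$. Then set $o_t=\max\{d_t-x_t,0\}$. $A_\beta$ is $A_z$ with $z=\beta$. *)

From HB Require Import structures.
From mathcomp Require Import all_boot all_order all_algebra.
Set Implicit Arguments. Unset Strict Implicit. Unset Printing Implicit Defensive.
Import Order.TTheory GRing.Theory Num.Theory.
Local Open Scope ring_scope.

(* Time slots are 1, 2, ..., T (natural numbers); a demand sequence is a
   function d : nat -> nat of which only d 1, ..., d T are ever used
   (slots t <= 0 carry no demand and no reservation). *)

Definition window (tau t : nat) : seq nat :=
  [seq i <- iota 1 t | (t < i + tau)%N].

(* o t = on-demand instances at t, r t = instances newly reserved at t. *)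
Definition feasible (tau T : nat) (d o r : nat -> nat) : Prop :=
  forall t : nat, (1 <= t <= T)%N ->
    (d t <= o t + \sum_(i <- window tau t) r i)%N.

Definition cost (R : realFieldType) (p alpha : R) (T : nat)
    (d o r : nat -> nat) : R :=
  \sum_(1 <= t < T.+1)
     ((o t)%:R * p + (r t)%:R + alpha * p * ((d t)%:R - (o t)%:R)).

Definition unmet (tau t : nat) (d x : nat -> nat) : nat :=
  count (fun i => (x i < d i)%N) (window tau t).

Definition bump (tau t : nat) (x : nat -> nat) : nat -> nat :=
  fun i => if (t < i + tau)%N && (i < t + tau)%N then (x i).+1 else x i.

(* The while loop at time t, run with a fuel bound; returns the final x and
   the number r_t of iterations (= reservations made at t). *)
Fixpoint reserve_loop (R : realFieldType) (p z : R) (tau t : nat)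
    (d : nat -> nat) (fuel : nat) (x : nat -> nat) : (nat -> nat) * nat :=
  match fuel with
  | 0%N => (x, 0%N)
  | fuel'.+1 =>
      if z < p * (unmet tau t d x)%:R then
        let: (x', k) := reserve_loop p z tau t d fuel' (bump tau t x) in
        (x', k.+1)
      else (x, 0%N)
  end.

(* The fuel suffices for z >= 0: after max_{i in window} d_i iterations no
   slot of the window is unmet any more, so the loop guard is false. *)
Definition loop_fuel (tau t : nat) (d : nat -> nat) : nat :=
  (\sum_(i <- window tau t) d i)%N.

Fixpoint Az_state (R : realFieldType) (p z : R) (tau : nat) (d : nat -> nat)
    (t : nat) : nat -> nat :=
  match t with
  | 0%N => fun _ => 0%N
  | t'.+1 => (reserve_loop p z tau t'.+1 d (loop_fuel tau t'.+1 d)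
                (Az_state p z tau d t')).1
  end.

Definition Az_r (R : realFieldType) (p z : R) (tau : nat) (d : nat -> nat)
    (t : nat) : nat :=
  (reserve_loop p z tau t d (loop_fuel tau t d) (Az_state p z tau d t.-1)).2.

(* o_t = max(d_t - x_t, 0) (truncated subtraction on nat) *)
Definition Az_o (R : realFieldType) (p z : R) (tau : nat) (d : nat -> nat)
    (t : nat) : nat :=
  (d t - Az_state p z tau d t t)%N.

Definition cost_Az (R : realFieldType) (p alpha z : R) (tau T : nat)
    (d : nat -> nat) : R :=
  cost p alpha T d (Az_o p z tau d) (Az_r p z tau d).

From Pilot Require Import Defs.
From HB Require Import structures.
From mathcomp Require Import all_boot all_order all_algebra.
From mathcomp Require Import zify ring lra.
Import Order.TTheory GRing.Theory Num.Theory.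
Local Open Scope ring_scope.
Set Implicit Arguments. Unset Strict Implicit. Unset Printing Implicit Defensive.

(* With z = 1 / (1 - alpha), a schedule with R reservations, on-demand usage O
   and total demand D costs R + (p/z) O + alpha p D.  It therefore suffices that
   the reservations R_A and the on-demand usage O_A of A_z satisfy
   R_A + (p/z) O_A <= 2 (R + (p/z) O) for every feasible schedule: applied to
   the given schedule and to the one serving all demand on demand (R = 0,
   O = D), the two bounds average out to the ratio 2 - alpha.

   Reservations: A_z reserves no more than the algorithm that first makes the
   reservations of the schedule and then runs the loop of A_z.  Each extra
   reservation of the latter happens while more than z/p slots of the window
   are unmet, and lowers by that much the demand not covered by the schedule's
   reservations, which is at most O.  Hence R_A <= R + (p/z) O.

   On-demand usage: colour greedily the slots served partly on demand, each
   avoiding the colours of the earlier slots still uncovered; as the loop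
   stops once at most z/p slots are unmet, at most z/p colours occur.  Between
   two slots of the same colour less than tau apart A_z reserves enough to
   cover the on-demand usage of the earlier one, so in each window the
   on-demand usage of a colour class is at most the demand of its last slot.
   Feasibility and induction then bound the on-demand usage of A_z on a class
   by that of the schedule on the class plus R, whence
   (p/z) O_A <= (p/z) O + R. *)

(* [sum_oc f a b] sums [f] over [a < s <= b]; thus [sum_oc r (t - tau) t]
   counts the reservations covering slot [t], the truncated subtraction
   accounting for the absent slots [<= 0]. *)
Definition sum_oc (f : nat -> nat) (a b : nat) : nat := (\sum_(a.+1 <= s < b.+1) f s)%N.

Section SumOc.
Variable f : nat -> nat.

Lemma sum_oc_cat a b c : (a <= b)%N -> (b <= c)%N -> sum_oc f a c = (sum_oc f a b + sum_oc f b c)%N.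
Proof. by move=> le_ab le_bc; rewrite /sum_oc (@big_cat_nat _ _ _ b.+1). Qed.

Lemma sum_oc_geq a b : (b <= a)%N -> sum_oc f a b = 0%N.
Proof. by move=> le_ba; rewrite /sum_oc big_geq. Qed.

Lemma sum_ocSr a b : (a <= b)%N -> sum_oc f a b.+1 = (sum_oc f a b + f b.+1)%N.
Proof. by move=> le_ab; rewrite /sum_oc big_nat_recr. Qed.

Lemma sum_oc1 a : sum_oc f a a.+1 = f a.+1.
Proof. by rewrite /sum_oc big_nat1. Qed.

Lemma leq_sum_ocr a b c : (b <= c)%N -> (sum_oc f a b <= sum_oc f a c)%N.
Proof.
move=> le_bc; case: (leqP a b) => [le_ab|lt_ba]; last by rewrite sum_oc_geq // ltnW.
by rewrite (@sum_oc_cat a b c) // leq_addr.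
Qed.

Lemma leq_sum_ocl a b c : (a <= b)%N -> (sum_oc f b c <= sum_oc f a c)%N.
Proof.
move=> le_ab; case: (leqP b c) => [le_bc|lt_cb]; last by rewrite sum_oc_geq // ltnW.
by rewrite (@sum_oc_cat a b c) // leq_addl.
Qed.

Lemma sum_ocE lo a b : (lo <= a.+1)%N ->
  sum_oc f a b = (\sum_(lo <= i < b.+1 | (a < i)%N) f i)%N.
Proof. by move=> le_lo; rewrite /sum_oc (big_nat_widenl _ _ _ _ _ le_lo). Qed.

End SumOc.

Lemma sum_ocD (f g : nat -> nat) a b :
  sum_oc (fun s => f s + g s)%N a b = (sum_oc f a b + sum_oc g a b)%N.
Proof. by rewrite /sum_oc big_split. Qed.

Lemma mem_window tau t i :
  (i \in window tau t) = [&& (1 <= i)%N, (i <= t)%N & (t < i + tau)%N].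
Proof. by rewrite /window mem_filter mem_iota add1n ltnS andbC -andbA. Qed.

Lemma sum_window (f : nat -> nat) tau t :
  (\sum_(i <- window tau t) f i = sum_oc f (t - tau) t)%N.
Proof.
rewrite /window big_filter (@sum_ocE _ 1) // /index_iota subn1 /=.
rewrite big_seq_cond [RHS]big_seq_cond; apply: eq_bigl => i.
by rewrite mem_iota; case: (1 <= i < 1 + t)%N / andP => //= -[le1i lei]; apply/idP/idP; lia.
Qed.

Lemma sub_in_count (T : eqType) (a b : pred T) (s : seq T) :
  {in s, subpred a b} -> (count a s <= count b s)%N.
Proof.
elim: s => [//|x s IHs] sub_ab /=; apply: leq_add.
  by case: (boolP (a x)) => //= /(sub_ab x (mem_head _ _)) ->.
by apply: IHs => y s_y; apply: sub_ab; rewrite in_cons s_y orbT.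
Qed.

Lemma feasible_sum_oc tau T d o r : feasible tau T d o r ->
  forall t, (1 <= t <= T)%N -> (d t <= o t + sum_oc r (t - tau) t)%N.
Proof. by move=> feas t range_t; rewrite -sum_window; apply: feas. Qed.

Lemma sum_ltn_minn e b : (\sum_(q < e) (q < b)%N : nat)%N = minn e b.
Proof.
elim: e => [|e IHe]; first by rewrite big_ord0 min0n.
by rewrite big_ord_recr /= IHe; case: ltnP => /=; lia.
Qed.

Definition mex (s : seq nat) : nat := find (fun c => c \notin s) (iota 0 (size s).+1).

Lemma has_mex (s : seq nat) : has (fun c => c \notin s) (iota 0 (size s).+1).
Proof.
apply/negPn/negP => /hasPn all_in.
have sub_s : {subset iota 0 (size s).+1 <= s} by move=> c /all_in /negPn.
by have := uniq_leq_size (iota_uniq 0 (size s).+1) sub_s; rewrite size_iota ltnn.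
Qed.

Lemma mex_le_size (s : seq nat) : (mex s <= size s)%N.
Proof. by rewrite /mex -ltnS -[X in (_ < X)%N](size_iota 0) -has_find has_mex. Qed.

Lemma mex_notin (s : seq nat) : mex s \notin s.
Proof. by have := nth_find 0 (has_mex s); rewrite nth_iota ?ltnS ?mex_le_size. Qed.

Section AlgorithmA.
Variables (R : realFieldType) (p z : R) (tau : nat) (d : nat -> nat).
Hypothesis tau_gt0 : (0 < tau)%N.
Hypothesis z_gt0 : 0 < z.
Hypothesis p_gt0 : 0 < p.

Definition bumped (t i : nat) : bool := (t < i + tau)%N && (i < t + tau)%N.

(* [bumpn x t k]: the state [x] after [k] iterations of the loop at time [t]. *)
Definition bumpn (x : nat -> nat) (t k : nat) : nat -> nat :=
  fun i => (x i + k * bumped t i)%N.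

Lemma bumpn0 x t : bumpn x t 0 =1 x.
Proof. by move=> i; rewrite /bumpn addn0. Qed.

Lemma bumpn_bump x t k : bumpn (Defs.bump tau t x) t k =1 bumpn x t k.+1.
Proof. by move=> i; rewrite /bumpn /Defs.bump /bumped; case: ifP => /= _; lia. Qed.

Lemma bumpn_add x t k l : bumpn (bumpn x t k) t l =1 bumpn x t (k + l).
Proof. by move=> i; rewrite /bumpn; lia. Qed.

Lemma bumped_window t i : i \in window tau t -> bumped t i.
Proof. by rewrite mem_window /bumped => /and3P[le1i leit ltti]; rewrite ltti; lia. Qed.

Lemma eq_unmet t x y : x =1 y -> unmet tau t d x = unmet tau t d y.
Proof. by move=> eq_xy; apply: eq_count => i; rewrite eq_xy. Qed.

Lemma reserve_loopE t fuel x :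
  (reserve_loop p z tau t d fuel x).1 =1 bumpn x t (reserve_loop p z tau t d fuel x).2.
Proof.
elim: fuel x => [|fuel IHfuel] x /=; first exact/fsym/bumpn0.
case: ifP => _ /=; last exact/fsym/bumpn0.
have := IHfuel (Defs.bump tau t x).
case: (reserve_loop _ _ _ _ _ _ _) => y k /= eq_y i.
by rewrite eq_y bumpn_bump.
Qed.

Lemma reserve_loop_guard t fuel x m :
  (m < (reserve_loop p z tau t d fuel x).2)%N -> z < p * (unmet tau t d (bumpn x t m))%:R.
Proof.
elim: fuel x m => [//|fuel IHfuel] x m /=.
case: ifP => [guard|//] /=.
have := IHfuel (Defs.bump tau t x).
case: (reserve_loop _ _ _ _ _ _ _) => y k /= IHk.
case: m => [_|m]; first by rewrite (eq_unmet _ (bumpn0 x t)).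
by rewrite ltnS => /IHk; rewrite (eq_unmet _ (bumpn_bump x t m)).
Qed.

Lemma sum_deficit_bump (w : seq nat) t x : {in w, forall i, bumped t i} ->
  (\sum_(i <- w) (d i - Defs.bump tau t x i) + count (fun i => x i < d i) w =
   \sum_(i <- w) (d i - x i))%N.
Proof.
elim: w => [|a w IHw] w_bumped; first by rewrite !big_nil.
rewrite !big_cons /= -IHw; last by move=> i w_i; apply: w_bumped; rewrite in_cons w_i orbT.
move: (w_bumped a (mem_head _ _)); rewrite /Defs.bump /bumped => ->.
by case: ltnP => /=; lia.
Qed.

(* Every iteration run with a true guard lowers the total deficit of the
   window by at least one, so a fuel bounding that deficit never runs out. *)
Lemma reserve_loop_guard_end t fuel x :
  (\sum_(i <- window tau t) (d i - x i) <= fuel)%N ->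
  ~~ (z < p * (unmet tau t d (bumpn x t (reserve_loop p z tau t d fuel x).2))%:R).
Proof.
elim: fuel x => [|fuel IHfuel] x /= deficit_le.
  have -> : unmet tau t d (bumpn x t 0) = 0%N.
    rewrite (eq_unmet _ (bumpn0 x t)) /unmet.
    apply/eqP; rewrite -leqn0 leqNgt -has_count; apply/hasPn => i w_i.
    rewrite -leqNgt -subn_eq0 -leqn0; apply: leq_trans deficit_le.
    by rewrite (big_rem i w_i) /= leq_addr.
  by rewrite mulr0 -leNgt ltW.
case: ifP => [guard|guard]; last by rewrite /= (eq_unmet _ (bumpn0 x t)) guard.
have unmet_gt0 : (0 < unmet tau t d x)%N.
  by rewrite lt0n; apply: contraTneq guard => ->; rewrite mulr0 -leNgt ltW.
have := IHfuel (Defs.bump tau t x).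
case: (reserve_loop _ _ _ _ _ _ _) => y k /= IHk.
rewrite -(eq_unmet _ (bumpn_bump x t k)); apply: IHk.
have := sum_deficit_bump x (@bumped_window t); rewrite /unmet in unmet_gt0; lia.
Qed.

Local Notation rA := (Az_r p z tau d).
Local Notation xA := (Az_state p z tau d).
Local Notation oA := (Az_o p z tau d).

Lemma sum_bumped (f : nat -> nat) t i : (t < i + tau)%N -> (i - tau <= t)%N ->
  (\sum_(1 <= s < t.+1) f s * bumped s i = sum_oc f (i - tau) t)%N.
Proof.
move=> lt_t lt_i; rewrite (@sum_ocE _ 1) // [RHS]big_mkcond /=.
apply: eq_big_nat => s /andP[le1s lest]; rewrite /bumped.
have -> : (s < i + tau)%N by lia.
have -> : (i < s + tau)%N = (i - tau < s)%N by apply/idP/idP; lia.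
by case: ifP; rewrite ?muln1 ?muln0.
Qed.

Lemma Az_stateS t : xA t.+1 =1 bumpn (xA t) t.+1 (rA t.+1).
Proof. exact: reserve_loopE. Qed.

Lemma Az_stateE t i : xA t i = (\sum_(1 <= s < t.+1) rA s * bumped s i)%N.
Proof.
elim: t => [|t IHt]; first by rewrite big_geq.
by rewrite Az_stateS /bumpn IHt [RHS]big_nat_recr.
Qed.

Lemma Az_state_window t i : (t < i + tau)%N -> (i - tau <= t)%N ->
  xA t i = sum_oc rA (i - tau) t.
Proof. by move=> lt_t lt_i; rewrite Az_stateE sum_bumped. Qed.

Lemma Az_oE t : oA t = (d t - sum_oc rA (t - tau) t)%N.
Proof. by rewrite /Az_o Az_state_window //; lia. Qed.

Lemma loop_fuel_enough t x : (\sum_(i <- window tau t) (d i - x i) <= loop_fuel tau t d)%N.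
Proof. by apply: leq_sum => i _; apply: leq_subr. Qed.

Lemma Az_guard t m : (m < rA t.+1)%N ->
  z < p * (unmet tau t.+1 d (bumpn (xA t) t.+1 m))%:R.
Proof. exact: reserve_loop_guard. Qed.

Lemma Az_guard_end t : p * (unmet tau t.+1 d (xA t.+1))%:R <= z.
Proof.
rewrite leNgt (eq_unmet _ (Az_stateS t)).
exact: reserve_loop_guard_end (loop_fuel_enough _ _).
Qed.

Lemma unmet_bumpn_Az_state t m :
  unmet tau t.+1 d (bumpn (xA t) t.+1 m) =
  count (fun i => sum_oc rA (i - tau) t + m < d i)%N (window tau t.+1).
Proof.
apply: eq_in_count => i w_i; have := bumped_window w_i.
move: w_i; rewrite mem_window /bumpn => /and3P[le1i leit ltti] ->.
by rewrite Az_state_window //; lia.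
Qed.

Lemma unmet_Az_state t :
  unmet tau t d (xA t) = count (fun i => sum_oc rA (i - tau) t < d i)%N (window tau t).
Proof.
apply: eq_in_count => i; rewrite mem_window => /and3P[le1i leit ltti].
by rewrite Az_state_window //; lia.
Qed.

Definition uncovered (j t : nat) : bool := (t < j + tau)%N && (sum_oc rA (j - tau) t < d j)%N.

Definition uncovered_before (j : nat) : seq nat := [seq i <- iota 1 j.-1 | uncovered i j].

Fixpoint colour_upto (n : nat) : nat -> nat :=
  if n is n'.+1 then
    fun i => if i == n then mex (map (colour_upto n') (uncovered_before n)) else colour_upto n' i
  else fun _ => 0%N.

Definition colour (j : nat) : nat := colour_upto j j.

Lemma colour_uptoE n i : (i <= n)%N -> colour_upto n i = colour i.
Proof.
elim: n => [|n IHn] le_in; first by move: le_in; rewrite leqn0 => /eqP ->.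
rewrite /=; case: eqP => [->|neq_in]; first by rewrite /colour /= eqxx.
by apply: IHn; move: le_in; rewrite leq_eqVlt => /predU1P[|//].
Qed.

Lemma colourS j : colour j.+1 = mex (map colour (uncovered_before j.+1)).
Proof.
rewrite {1}/colour /= eqxx; congr mex; apply/eq_in_map => i.
by rewrite mem_filter mem_iota => /andP[_ /andP[_ lt_ij]]; apply: colour_uptoE.
Qed.

Lemma colour_uncovered_before j i : i \in uncovered_before j -> colour i != colour j.
Proof.
case: j => [//|j] uncov_i; rewrite colourS; apply/eqP => eq_colour.
by have := mex_notin (map colour (uncovered_before j.+1)); rewrite -eq_colour map_f.
Qed.

Lemma count_uncovered_le t : (0 < t)%N -> p * (count (uncovered^~ t) (iota 1 t))%:R <= z.
Proof.
case: t => [//|t] _; have := Az_guard_end t.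
rewrite unmet_Az_state /window count_filter.
by rewrite (@eq_count _ _ (uncovered^~ t.+1)) // => i; rewrite /uncovered /= andbC.
Qed.

Lemma oA_gt0 j : (0 < oA j)%N = uncovered j j.
Proof.
have lt_j : (j < j + tau)%N by rewrite -{1}(addn0 j) ltn_add2l.
by rewrite Az_oE /uncovered subn_gt0 lt_j.
Qed.

Lemma colour_lt_count_uncovered j : (0 < j)%N -> (0 < oA j)%N ->
  (colour j < count (uncovered^~ j) (iota 1 j))%N.
Proof.
case: j => [//|j] _; rewrite oA_gt0 => uncov_j.
have -> : iota 1 j.+1 = iota 1 j ++ [:: j.+1] by rewrite -[j.+1 in LHS]addn1 iotaD add1n.
rewrite count_cat /= uncov_j addn0 addn1 ltnS.
by rewrite colourS; apply: leq_trans (mex_le_size _) _; rewrite size_map size_filter.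
Qed.

Lemma oA_le_sum_rA_same_colour j j' : (0 < j)%N -> (j < j')%N -> (j' < j + tau)%N ->
  colour j = colour j' -> (oA j <= sum_oc rA j j')%N.
Proof.
move=> j_gt0 lt_jj' lt_j'j eq_colour.
have : ~~ uncovered j j'.
  apply/negP => uncov; have : j \in uncovered_before j' by rewrite mem_filter uncov mem_iota; lia.
  by move/colour_uncovered_before; rewrite eq_colour eqxx.
rewrite /uncovered lt_j'j -leqNgt Az_oE (sum_oc_cat _ (leq_subr tau j) (ltnW lt_jj')).
lia.
Qed.

Definition colour_part (c : nat) (f : nat -> nat) (j : nat) : nat :=
  if colour j == c then f j else 0%N.

(* Walking back from [s] through the earlier slots of colour [c] in its
   window ([m] is the last one visited): the on-demand usage of each is
   covered by reservations made before the next one, which all cover [s]. *)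
Lemma colour_chain s c : (0 < s)%N -> (0 < oA s)%N -> colour s = c ->
  forall n, (n < tau)%N -> (n < s)%N ->
  exists m, [/\ (s - n <= m <= s)%N, colour m = c &
    (sum_oc (colour_part c oA) (s - n.+1) s + sum_oc rA (s - tau) m <= d s)%N].
Proof.
move=> s_gt0 oA_gt0 colour_s; elim=> [|n IHn] lt_n_tau lt_ns.
  exists s; split=> //; first by rewrite leq_subr leqnn.
  have s_succ : s = (s - 1).+1 by lia.
  rewrite [X in sum_oc _ _ X]s_succ sum_oc1 -s_succ /colour_part colour_s eqxx.
  by move: oA_gt0; rewrite Az_oE; lia.
have [m [/andP[le_m le_ms] colour_m chain_m]] := IHn (ltnW lt_n_tau) (ltnW lt_ns).
set b := (s - n.+1)%N; have b_def : b = (s - n.+1)%N by [].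
have split_b : sum_oc (colour_part c oA) (s - n.+2) s =
               (colour_part c oA b + sum_oc (colour_part c oA) b s)%N.
  have b_succ : b = (s - n.+2).+1 by lia.
  by rewrite (@sum_oc_cat _ _ b s) ?b_succ ?sum_oc1; lia.
rewrite -b_def in chain_m; rewrite split_b.
have [colour_b|colour_b] := eqVneq (colour b) c.
  have part_b : colour_part c oA b = oA b by rewrite /colour_part colour_b eqxx.
  have := @oA_le_sum_rA_same_colour b m ltac:(lia) ltac:(lia) ltac:(lia).
  have := @sum_oc_cat rA (s - tau) b m ltac:(lia) ltac:(lia).
  rewrite colour_b colour_m part_b => split_m oA_b.
  by exists b; split=> //; lia.
have part_b : colour_part c oA b = 0%N by rewrite /colour_part (negbTE colour_b).
by exists m; split=> //; rewrite ?part_b; lia.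
Qed.

Lemma sum_colour_oA_window_le s c : (0 < s)%N -> (0 < oA s)%N -> colour s = c ->
  (sum_oc (colour_part c oA) (s - tau) s <= d s)%N.
Proof.
move=> s_gt0 oA_gt0 colour_s.
have [m [_ _ chain]] :=
  colour_chain s_gt0 oA_gt0 colour_s (n := (minn tau s).-1) ltac:(lia) ltac:(lia).
have -> : (s - tau = s - (minn tau s).-1.+1)%N by lia.
lia.
Qed.

Lemma sum_colour_oA_le (o r : nat -> nat) T c : feasible tau T d o r -> forall t, (t <= T)%N ->
  (sum_oc (colour_part c oA) 0 t <= sum_oc (colour_part c o) 0 t + sum_oc r 0 t)%N.
Proof.
move=> /feasible_sum_oc feas; elim/ltn_ind=> -[|t] IHt le_tT; first by rewrite sum_oc_geq.
case: (boolP ((colour t.+1 == c) && (0 < oA t.+1)%N)) => [/andP[/eqP colour_t oA_gt0]|no_part].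
  have := sum_colour_oA_window_le (ltn0Sn t) oA_gt0 colour_t.
  have := IHt (t.+1 - tau)%N ltac:(lia) ltac:(lia).
  have := feas t.+1 ltac:(lia).
  have := sum_oc_cat (colour_part c oA) (leq0n (t.+1 - tau)) (leq_subr tau t.+1).
  have := sum_oc_cat r (leq0n (t.+1 - tau)) (leq_subr tau t.+1).
  have : (sum_oc (colour_part c o) 0 (t.+1 - tau) + o t.+1 <= sum_oc (colour_part c o) 0 t.+1)%N.
    by rewrite sum_ocSr // /colour_part colour_t eqxx leq_add2r leq_sum_ocr //; lia.
  lia.
have part_t : colour_part c oA t.+1 = 0%N.
  by move: no_part; rewrite /colour_part; case: eqP => //= _; rewrite lt0n negbK => /eqP.
rewrite sum_ocSr // part_t addn0; apply: leq_trans (IHt t (ltnSn t) (ltnW le_tT)) _.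
by apply: leq_add; apply: leq_sum_ocr.
Qed.

Definition colour_bound (T : nat) : nat :=
  (\max_(0 <= t < T.+1) count (uncovered^~ t) (iota 1 t))%N.

Lemma colour_bound_le T : p * (colour_bound T)%:R <= z.
Proof.
rewrite /colour_bound; elim/big_ind: _ => [|a b le_a le_b|t _].
- by rewrite mulr0 ltW.
- by case: (leqP a b) => [le_ab|/ltnW le_ba]; rewrite ?(maxn_idPr le_ab) ?(maxn_idPl le_ba).
- by case: t => [|t]; [rewrite mulr0 ltW | apply: count_uncovered_le].
Qed.

Lemma colour_lt_bound T j : (1 <= j <= T)%N -> (0 < oA j)%N -> (colour j < colour_bound T)%N.
Proof.
move=> /andP[j_gt0 le_jT] oA_gt0; apply: leq_trans (colour_lt_count_uncovered j_gt0 oA_gt0) _.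
apply: (@leq_bigmax_seq _ _ _ (fun t => count (uncovered^~ t) (iota 1 t)) j) => //.
by rewrite mem_index_iota ltnS le_jT.
Qed.

Lemma sum_colour_part (f : nat -> nat) N j :
  (\sum_(0 <= c < N) colour_part c f j = if (colour j < N)%N then f j else 0)%N.
Proof.
rewrite /colour_part -big_mkcond (eq_bigl (pred1 (colour j))) => [|c]; last exact: eq_sym.
by rewrite big_nat1_eq.
Qed.

Lemma sum_oA_le (o r : nat -> nat) T : feasible tau T d o r ->
  (sum_oc oA 0 T <= sum_oc o 0 T + colour_bound T * sum_oc r 0 T)%N.
Proof.
move=> feas; set N := colour_bound T.
have -> : sum_oc oA 0 T = (\sum_(0 <= c < N) sum_oc (colour_part c oA) 0 T)%N.
  rewrite /sum_oc exchange_big_nat /=; apply: eq_big_nat => j /andP[j_gt0 lt_jT].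
  rewrite sum_colour_part; case: ifP => // /negbT; rewrite -leqNgt.
  case: (posnP (oA j)) => // oA_gt0; rewrite leqNgt colour_lt_bound //; lia.
have : (\sum_(0 <= c < N) sum_oc (colour_part c o) 0 T <= sum_oc o 0 T)%N.
  rewrite /sum_oc exchange_big_nat /=; apply: leq_sum => j _.
  by rewrite sum_colour_part; case: ifP.
have : (\sum_(0 <= c < N) sum_oc (colour_part c oA) 0 T <=
        \sum_(0 <= c < N) (sum_oc (colour_part c o) 0 T + sum_oc r 0 T))%N.
  by apply: leq_sum => c _; apply: sum_colour_oA_le feas _ (leqnn T).
rewrite big_split /= sum_nat_const_nat subn0; lia.
Qed.

Section Simulation.
Variable r : nat -> nat.

(* The algorithm that at each time first makes the reservations of [r] and
   then runs the loop of [A_z]. *)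
Fixpoint sim_state (t : nat) : nat -> nat :=
  if t is t'.+1 then
    (reserve_loop p z tau t d (loop_fuel tau t d) (bumpn (sim_state t') t (r t))).1
  else fun _ => 0%N.

Definition sim_extra (t : nat) : nat :=
  (reserve_loop p z tau t d (loop_fuel tau t d) (bumpn (sim_state t.-1) t (r t))).2.

Definition sim_r (t : nat) : nat := (r t + sim_extra t)%N.

Lemma sim_stateS t : sim_state t.+1 =1 bumpn (sim_state t) t.+1 (sim_r t.+1).
Proof. by move=> i; rewrite /= reserve_loopE bumpn_add. Qed.

Lemma sim_stateE t i : sim_state t i = (\sum_(1 <= s < t.+1) sim_r s * bumped s i)%N.
Proof.
elim: t => [|t IHt]; first by rewrite big_geq.
by rewrite sim_stateS /bumpn IHt [RHS]big_nat_recr.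
Qed.

Lemma sim_state_window t i : (t < i + tau)%N -> (i - tau <= t)%N ->
  sim_state t i = sum_oc sim_r (i - tau) t.
Proof. by move=> lt_t lt_i; rewrite sim_stateE sum_bumped. Qed.

Lemma sim_guard_end t :
  p * (count (fun i => sum_oc sim_r (i - tau) t.+1 < d i)%N (window tau t.+1))%:R <= z.
Proof.
have := reserve_loop_guard_end (loop_fuel_enough t.+1 (bumpn (sim_state t) t.+1 (r t.+1))).
rewrite -/(sim_extra t.+1) (eq_unmet _ (bumpn_add _ _ _ _)) -/(sim_r t.+1).
rewrite -(eq_unmet _ (sim_stateS t)) -leNgt /unmet.
congr (_ * _%:R <= _); apply: eq_in_count => i; rewrite mem_window => /and3P[le1i leit ltti].
by rewrite sim_state_window //; lia.
Qed.

Definition sim_unmet (t q : nat) : nat :=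
  count (fun i => sum_oc sim_r (i - tau) t + r t.+1 + q < d i)%N (window tau t.+1).

Lemma sim_guard t q : (q < sim_extra t.+1)%N -> z < p * (sim_unmet t q)%:R.
Proof.
move/reserve_loop_guard; rewrite /unmet; congr (_ < _ * _%:R); apply: eq_in_count => i w_i.
have := bumped_window w_i; move: w_i; rewrite mem_window /bumpn => /and3P[le1i leit ltti] ->.
by rewrite /= sim_state_window //; lia.
Qed.

(* By induction on [t]: if [A_z] reserved more at [t+1] than needed to catch
   up with the simulation, its loop would have run on a state covering less
   than the final state of the simulation, whose guard is false. *)
Lemma sum_rA_le_sum_sim_r t : (sum_oc rA 0 t <= sum_oc sim_r 0 t)%N.
Proof.
elim/ltn_ind: t => -[|t] IHt; first by rewrite sum_oc_geq.
have IHt' := IHt t (ltnSn t).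
have le_sim := leq_sum_ocr sim_r 0 (leqnSn t).
rewrite sum_ocSr //; set M := (sum_oc sim_r 0 t.+1 - sum_oc rA 0 t)%N.
case: (leqP (rA t.+1) M) => [|/Az_guard]; first by rewrite /M; lia.
rewrite unmet_bumpn_Az_state; apply: contraLR => _; rewrite -leNgt.
apply: le_trans (sim_guard_end t); rewrite ler_pM2l // ler_nat.
apply: sub_in_count => i; rewrite mem_window => /and3P[le1i leit ltti].
have := IHt (i - tau)%N ltac:(lia).
have := @sum_oc_cat rA 0 (i - tau) t (leq0n _) ltac:(lia).
have := @sum_oc_cat sim_r 0 (i - tau) t.+1 (leq0n _) ltac:(lia).
rewrite /M /=; lia.
Qed.

(* The demand of slot [i] covered neither by [r] nor by the extra
   reservations made at times [i..t]. *)
Definition residual (i t : nat) : nat := (d i - sum_oc r (i - tau) i - sum_oc sim_extra i.-1 t)%N.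

Definition potential (T t : nat) : nat := (\sum_(1 <= i < T.+1) residual i t)%N.

Lemma leq_residualS i t : (residual i t.+1 <= residual i t)%N.
Proof. by rewrite /residual leq_sub2l // leq_sum_ocr. Qed.

Lemma residual_step i t : (1 <= i <= t.+1)%N ->
  (residual i t - residual i t.+1)%N = minn (sim_extra t.+1) (residual i t).
Proof. by move=> lt_i; rewrite /residual sum_ocSr; lia. Qed.

Lemma sum_sim_unmet_le t :
  (\sum_(q < sim_extra t.+1) sim_unmet t q <=
   \sum_(i <- window tau t.+1) minn (sim_extra t.+1) (residual i t))%N.
Proof.
rewrite /sim_unmet (eq_bigr _ (fun q _ => esym (sumn_count _ _))).
under eq_bigr do rewrite sumnE big_map.
rewrite exchange_big /= big_seq [leqRHS]big_seq; apply: leq_sum => i.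
rewrite mem_window -sum_ltn_minn => /and3P[le1i leit ltti]; apply: leq_sum => q _.
case: ltnP => //= unmet_i; rewrite lt0b; move: unmet_i; rewrite /sim_r sum_ocD.
have := leq_sum_ocr r (i - tau) leit.
have := @leq_sum_ocl sim_extra (i - tau) i.-1 t ltac:(lia).
have := @sum_ocSr r (i - tau) t ltac:(lia).
rewrite /residual; lia.
Qed.

(* Each extra reservation made at time [t+1] while [n] slots of the window
   are unmet lowers the potential by at least [n]. *)
Lemma potential_step T t : (t < T)%N ->
  (\sum_(q < sim_extra t.+1) sim_unmet t q + potential T t.+1 <= potential T t)%N.
Proof.
move=> lt_tT; apply: leq_trans (leq_add (sum_sim_unmet_le t) (leqnn _)) _.
have -> : potential T t =
    (potential T t.+1 + \sum_(1 <= i < T.+1) (residual i t - residual i t.+1))%N.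
  rewrite /potential sumnB => [|i _]; last exact: leq_residualS.
  by rewrite subnKC //; apply: leq_sum => i _; apply: leq_residualS.
rewrite addnC leq_add2l [leqRHS](@big_cat_nat _ _ _ t.+2 1 T.+1) //=.
apply: (leq_trans _ (leq_addr _ _)).
rewrite /window big_filter big_mkcond /index_iota subn1 big_seq [leqRHS]big_seq.
apply: leq_sum => i; rewrite mem_iota => range_i.
by case: ifP => // _; rewrite residual_step //; lia.
Qed.

Lemma potential_telescope T n : (n <= T)%N ->
  (\sum_(0 <= t < n) \sum_(q < sim_extra t.+1) sim_unmet t q + potential T n <= potential T 0)%N.
Proof.
elim: n => [|n IHn] le_nT; first by rewrite big_geq.
rewrite big_nat_recr //= -addnA; apply: leq_trans (IHn (ltnW le_nT)).
by rewrite leq_add2l potential_step.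
Qed.

Lemma potential0 T : potential T 0 = (\sum_(1 <= i < T.+1) (d i - sum_oc r (i - tau) i))%N.
Proof. by apply: eq_bigr => i _; rewrite /residual (sum_oc_geq _ (leq0n _)) subn0. Qed.

Lemma sim_extra_le t : z * (sim_extra t.+1)%:R <= p * (\sum_(q < sim_extra t.+1) sim_unmet t q)%:R.
Proof.
have -> : z * (sim_extra t.+1)%:R = \sum_(q < sim_extra t.+1) z.
  by rewrite sumr_const card_ord mulr_natr.
rewrite natr_sum mulr_sumr.
by apply: ler_sum => q _; apply/ltW/sim_guard.
Qed.

Lemma sum_sim_extra_le T :
  z * (sum_oc sim_extra 0 T)%:R <= p * (\sum_(1 <= i < T.+1) (d i - sum_oc r (i - tau) i))%:R.
Proof.
rewrite -potential0.
apply: le_trans (_ : p * (\sum_(0 <= t < T) \sum_(q < sim_extra t.+1) sim_unmet t q)%:R <= _).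
  rewrite /sum_oc big_add1 /= natr_sum mulr_sumr natr_sum mulr_sumr.
  by apply: ler_sum => t _; apply: sim_extra_le.
rewrite ler_pM2l // ler_nat; have := potential_telescope (leqnn T); lia.
Qed.

End Simulation.

Lemma reservation_bound T o r : feasible tau T d o r ->
  (sum_oc rA 0 T)%:R <= (sum_oc r 0 T)%:R + p / z * (sum_oc o 0 T)%:R.
Proof.
move=> /feasible_sum_oc feas.
have le_res : (\sum_(1 <= i < T.+1) (d i - sum_oc r (i - tau) i) <= sum_oc o 0 T)%N.
  rewrite [sum_oc o 0 T]/sum_oc !big_add1 /= big_nat_cond [leqRHS]big_nat_cond.
  by apply: leq_sum => i /andP[/andP[_ lt_iT] _]; have := feas i.+1 lt_iT; lia.
have le_extra : (sum_oc (sim_extra r) 0 T)%:R <= p / z * (sum_oc o 0 T)%:R.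
  rewrite mulrAC ler_pdivlMr // mulrC; apply: le_trans (sum_sim_extra_le r T) _.
  by rewrite ler_pM2l // ler_nat.
apply: le_trans (_ : (sum_oc (sim_r r) 0 T)%:R <= _); first by rewrite ler_nat sum_rA_le_sum_sim_r.
by rewrite /sim_r sum_ocD natrD lerD2l.
Qed.

Lemma on_demand_bound T o r : feasible tau T d o r ->
  p / z * (sum_oc oA 0 T)%:R <= p / z * (sum_oc o 0 T)%:R + (sum_oc r 0 T)%:R.
Proof.
move=> /sum_oA_le le_oA.
have pz_ge0 : 0 <= p / z by rewrite divr_ge0 ?ltW.
have bound_le1 : p / z * (colour_bound T)%:R <= 1.
  by rewrite mulrAC ler_pdivrMr // mul1r colour_bound_le.
apply: le_trans (_ : p / z * ((sum_oc o 0 T)%:R + (colour_bound T)%:R * (sum_oc r 0 T)%:R) <= _).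
  by rewrite ler_wpM2l // -natrM -natrD ler_nat.
by rewrite mulrDr lerD2l mulrA ler_piMl.
Qed.

Lemma Az_cost_le_twice T o r : feasible tau T d o r ->
  (sum_oc rA 0 T)%:R + p / z * (sum_oc oA 0 T)%:R <=
  2 * ((sum_oc r 0 T)%:R + p / z * (sum_oc o 0 T)%:R).
Proof.
move=> feas; have := reservation_bound feas; have := on_demand_bound feas; lra.
Qed.

End AlgorithmA.

Lemma cost_sum_oc (R : realFieldType) (p alpha : R) T (d o r : nat -> nat) :
  cost p alpha T d o r =
  (sum_oc r 0 T)%:R + p * (1 - alpha) * (sum_oc o 0 T)%:R + alpha * p * (sum_oc d 0 T)%:R.
Proof.
rewrite /cost /sum_oc !natr_sum !mulr_sumr -!big_split /=.
by apply: eq_bigr => t _; ring.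
Qed.

(* Averaging the bounds [e <= 2 c] and [e <= 2 q d], with weights
   [(2 - alpha) / 2] and [alpha / 2]. *)
Lemma two_minus_alpha_bound (R : realFieldType) (alpha q c d e : R) :
  0 <= alpha -> alpha < 1 -> e <= 2 * c -> e <= 2 * (q * (1 - alpha) * d) ->
  e + alpha * q * d <= (2 - alpha) * (c + alpha * q * d).
Proof.
move=> alpha_ge0 alpha_lt1 le_c le_d.
have : 0 <= (2 - alpha) * (2 * c - e) + alpha * (2 * (q * (1 - alpha) * d) - e).
  by rewrite addr_ge0 // mulr_ge0 // subr_ge0 //; lra.
lra.
Qed.

Theorem proposition1 (R : realFieldType) (p alpha : R) (tau T : nat)
    (d : nat -> nat) :
  0 < p -> 0 <= alpha -> alpha < 1 -> (1 <= tau)%N ->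
  forall o r : nat -> nat, feasible tau T d o r ->
  cost_Az p alpha (1 / (1 - alpha)) tau T d
    <= (2 - alpha) * cost p alpha T d o r.
Proof.
move=> p_gt0 alpha_ge0 alpha_lt1 tau_gt0 o r feas.
have z_gt0 : 0 < 1 / (1 - alpha) by rewrite divr_gt0 // subr_gt0.
have pz : p / (1 / (1 - alpha)) = p * (1 - alpha) by rewrite div1r invrK.
have on_demand_only : feasible tau T d d (fun=> 0%N) by move=> t _; rewrite big1 ?addn0.
have := Az_cost_le_twice tau_gt0 z_gt0 p_gt0 feas.
have := Az_cost_le_twice tau_gt0 z_gt0 p_gt0 on_demand_only.
have sum0 : sum_oc (fun=> 0%N) 0 T = 0%N by rewrite /sum_oc big1.
rewrite /cost_Az !cost_sum_oc pz sum0 mulr0n add0r => le_d le_c.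
exact: two_minus_alpha_bound.
Qed.
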